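(* If $h:[0,\infty)\to[\frac{\beta u_0-1}{r},\frac{\beta u_0}{r}]$ is a decreasing solution to the HJB equation with $h'(0)=0$, then there exist $z_f\in(0,d]$, $z_g\in[d,\infty)$ and real constants $A_1,B_1,A_2,B_2,a_1,b_1,a_2,b_2$ such that, with $\underline f(z)=A_1e^{\theta_1(0)z}+B_1e^{-\theta_2(0)z}$, $\bar f(z)=\frac{\beta u_0}{r}+A_2e^{\theta_1(u_0)z}+B_2e^{-\theta_2(u_0)z}$, $\underline g(z)=-\frac1r+a_1e^{\theta_1(0)z}+b_1e^{-\theta_2(0)z}$, $\bar g(z)=\frac{\beta u_0-1}{r}+a_2e^{\theta_1(u_0)z}+b_2e^{-\theta_2(u_0)z}$, $$h=\bar f\,\mathbf 1_{[0,z_f]}+\underline f\,\mathbf 1_{(z_f,d]}+\underline g\,\mathbf 1_{(d,z_g]}+\bar g\,\mathbf 1_{[z_g,\infty)\cap(d,\infty)}.$$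
   Context: Fix $\mu\in\mathbb R$, $\sigma>0$, $u_0>0$, $r>0$, $\beta>0$, $d>0$. For $u\in[0,u_0]$ let $\theta_1(u)=\frac{\sqrt{(\mu-u)^2+2r\sigma^2}+(\mu-u)}{\sigma^2}$ and $\theta_2(u)=\frac{\sqrt{(\mu-u)^2+2r\sigma^2}-(\mu-u)}{\sigma^2}$. The HJB equation is $$-rh(z)-\mu h'(z)+\tfrac{\sigma^2}{2}h''(z)+\sup_{u\in[0,u_0]}\{(\beta+h'(z))u\}=\mathbf 1_{\{z>d\}}.$$ A solution to the HJB equation is a function $h:[0,\infty)\to[\frac{\beta u_0-1}{r},\frac{\beta u_0}{r}]$ that is continuously differentiable on $[0,\infty)$, twice continuously differentiable on $[0,d]$ and on $(d,\infty)$ respectively (with $h'(0),h''(0)$ the right derivatives and $h''(d)$ the left second derivative), and satisfies the HJB equation for all $z\ge0$. *)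

From Stdlib Require Import Reals.
From Coquelicot Require Import Coquelicot.
Open Scope R_scope.

Definition theta1 (mu sigma r u : R) : R :=
  (sqrt ((mu - u)^2 + 2 * r * sigma^2) + (mu - u)) / sigma^2.
Definition theta2 (mu sigma r u : R) : R :=
  (sqrt ((mu - u)^2 + 2 * r * sigma^2) - (mu - u)) / sigma^2.

Definition right_deriv (f : R -> R) (x l : R) : Prop :=
  filterlim (fun t => (f (x + t) - f x) / t) (at_right 0) (locally l).
Definition left_deriv (f : R -> R) (x l : R) : Prop :=
  filterlim (fun t => (f (x + t) - f x) / t) (at_left 0) (locally l).

Definition is_sup_ctrl (u0 beta p S : R) : Prop :=
  is_lub (fun y => exists u, 0 <= u <= u0 /\ y = (beta + p) * u) S.

Definition ind_gt (d z : R) : R := if Rlt_dec d z then 1 else 0.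

(* h is a solution of the HJB equation, with h1 = h' and h2 = h''
   (h1 0, h2 0 right derivatives; h2 d the left second derivative). *)
Definition HJB_solution (mu sigma u0 r beta d : R) (h h1 h2 : R -> R) : Prop :=
  (forall z, 0 <= z -> (beta * u0 - 1) / r <= h z <= beta * u0 / r) /\
  right_deriv h 0 (h1 0) /\
  (forall z, 0 < z -> is_derive h z (h1 z)) /\
  filterlim h1 (at_right 0) (locally (h1 0)) /\
  (forall z, 0 < z -> continuous h1 z) /\
  right_deriv h1 0 (h2 0) /\
  (forall z, 0 < z < d -> is_derive h1 z (h2 z)) /\
  left_deriv h1 d (h2 d) /\
  filterlim h2 (at_right 0) (locally (h2 0)) /\
  (forall z, 0 < z < d -> continuous h2 z) /\
  filterlim h2 (at_left d) (locally (h2 d)) /\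
  (forall z, d < z -> is_derive h1 z (h2 z)) /\
  (forall z, d < z -> continuous h2 z) /\
  (forall z, 0 <= z -> exists S, is_sup_ctrl u0 beta (h1 z) S /\
      - r * h z - mu * h1 z + sigma^2 / 2 * h2 z + S = ind_gt d z).

From Stdlib Require Import Reals Lra Classical.
From Coquelicot Require Import Coquelicot.
Open Scope R_scope.

(* Wherever the sign of beta + h' is fixed, the supremum in the HJB equation is
   attained at the bang-bang control u = u0 or u = 0, so h solves a linear
   constant-coefficient ODE with characteristic roots theta1(u) and -theta2(u)
   and is a combination of the two exponentials.

   These regions are intervals because h' cannot fall below -beta and come back
   up: at an interior minimum c of h' below -beta we have h''(c) = 0, and
   differentiating the equation -r h - mu h' + sigma^2/2 h'' = const shows
   h'' > 0 just left of c.  As h'(0) = 0 > -beta, [0, d] consists of a region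
   h' >= -beta followed by one with h' < -beta.  On (d, oo) the order is
   reversed, since h' < -beta cannot persist forever for h bounded below.
   The formulas extend to the switching points by continuity of h. *)

Definition is_interval (I : R -> Prop) : Prop :=
  forall x y t, I x -> I y -> x <= t <= y -> I t.

Definition no_dip_below (p : R -> R) (m : R) (I : R -> Prop) : Prop :=
  forall x z y, I x -> I z -> x <= y <= z -> m <= p x -> m <= p z -> m <= p y.

Definition hjb_branch (mu sigma r u c A B z : R) : R :=
  c + A * exp (theta1 mu sigma r u * z) + B * exp (- theta2 mu sigma r u * z).

Definition optimal_control (u0 beta p u : R) : Prop :=
  (u = u0 /\ - beta <= p) \/ (u = 0 /\ p <= - beta).

Lemma locally_interval (c : R) (P : R -> Prop) :
  locally c P -> exists del, 0 < del /\ forall t, Rabs (t - c) < del -> P t.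
Proof.
  intros [del Hdel]. exists del. split; [apply cond_pos |].
  intros t Ht. apply Hdel, Ht.
Qed.

Lemma at_left_interval (c : R) (P : R -> Prop) :
  at_left c P -> exists del, 0 < del /\ forall t, c - del < t < c -> P t.
Proof.
  intros H. destruct (locally_interval c _ H) as [del [Hdel HP]].
  exists del. split; [exact Hdel |].
  intros t Ht. apply HP; [rewrite Rabs_left | ]; lra.
Qed.

Lemma at_right_interval (c : R) (P : R -> Prop) :
  at_right c P -> exists del, 0 < del /\ forall t, c < t < c + del -> P t.
Proof.
  intros H. destruct (locally_interval c _ H) as [del [Hdel HP]].
  exists del. split; [exact Hdel |].
  intros t Ht. apply HP; [rewrite Rabs_right | ]; lra.
Qed.

Lemma at_right_below (a b : R) : a < b -> at_right a (fun t => a < t < b).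
Proof.
  intros Hab. exists (mkposreal _ (proj2 (Rlt_0_minus _ _) Hab)).
  intros t Ht Hat. change (Rabs (t - a) < b - a) in Ht.
  rewrite Rabs_right in Ht; lra.
Qed.

Lemma at_left_above (a b : R) : a < b -> at_left b (fun t => a < t < b).
Proof.
  intros Hab. exists (mkposreal _ (proj2 (Rlt_0_minus _ _) Hab)).
  intros t Ht Htb. change (Rabs (t - b) < b - a) in Ht.
  rewrite Rabs_left in Ht; lra.
Qed.

Lemma continuous_lt_locally (f : R -> R) (c m : R) :
  continuous f c -> f c < m -> locally c (fun t => f t < m).
Proof. intros Hf Hc. exact (Hf _ (open_lt m (f c) Hc)). Qed.

Lemma continuous_at_left (f : R -> R) (x : R) :
  continuous f x -> filterlim f (at_left x) (locally (f x)).
Proof. apply filterlim_filter_le_1, filter_le_within. Qed.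

Lemma continuous_at_right (f : R -> R) (x : R) :
  continuous f x -> filterlim f (at_right x) (locally (f x)).
Proof. apply filterlim_filter_le_1, filter_le_within. Qed.

Lemma right_deriv_continuous (f : R -> R) (x l : R) :
  right_deriv f x l -> filterlim (fun t => f (x + t)) (at_right 0) (locally (f x)).
Proof.
  intros Hq.
  assert (Ht : filterlim (fun t : R => t) (at_right 0) (locally 0))
    by apply (continuous_at_right (fun t => t)), continuous_id.
  pose proof (filterlim_comp_2 _ _ Rmult Ht Hq (filterlim_mult 0 l)) as Hprod.
  pose proof (filterlim_comp_2 _ _ Rplus (filterlim_const (f x)) Hprod
                (filterlim_plus (f x) (0 * l))) as Hsum.
  simpl in Hsum.
  rewrite Rmult_0_l, Rplus_0_r in Hsum.
  refine (filterlim_within_ext _ _ _ _ Hsum).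
  intros t Ht0. field. lra.
Qed.

Lemma eq_of_right_limits (f g : R -> R) (a b l m : R) :
  a < b -> (forall t, a < t < b -> f t = g t) ->
  filterlim f (at_right a) (locally l) -> filterlim g (at_right a) (locally m) -> l = m.
Proof.
  intros Hab Heq Hf Hg.
  apply (filterlim_locally_unique (F := at_right a) g l m); [| exact Hg].
  apply (filterlim_ext_loc f); [| exact Hf].
  exact (filter_imp _ _ Heq (at_right_below a b Hab)).
Qed.

Lemma eq_of_left_limits (f g : R -> R) (a b l m : R) :
  a < b -> (forall t, a < t < b -> f t = g t) ->
  filterlim f (at_left b) (locally l) -> filterlim g (at_left b) (locally m) -> l = m.
Proof.
  intros Hab Heq Hf Hg.
  apply (filterlim_locally_unique (F := at_left b) g l m); [| exact Hg].
  apply (filterlim_ext_loc f); [| exact Hf].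
  exact (filter_imp _ _ Heq (at_left_above a b Hab)).
Qed.

Lemma eq_on_closed_interval (f g : R -> R) (a b : R) :
  a < b -> filterlim f (at_right a) (locally (f a)) -> filterlim f (at_left b) (locally (f b)) ->
  continuous g a -> continuous g b -> (forall t, a < t < b -> f t = g t) ->
  forall t, a <= t <= b -> f t = g t.
Proof.
  intros Hab Ha Hb Hga Hgb Heq t [Hat Htb].
  destruct (Rle_lt_or_eq_dec _ _ Hat) as [Hat' | <-].
  - destruct (Rle_lt_or_eq_dec _ _ Htb) as [Htb' | ->]; [apply Heq; lra |].
    exact (eq_of_left_limits f g a b _ _ Hab Heq Hb (continuous_at_left g b Hgb)).
  - exact (eq_of_right_limits f g a b _ _ Hab Heq Ha (continuous_at_right g a Hga)).
Qed.

Lemma derive_neg_at_left (f : R -> R) (c l : R) :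
  is_derive f c l -> l < 0 -> at_left c (fun t => f c < f t).
Proof.
  intros Hf Hl. apply is_derive_Reals in Hf.
  destruct (Hf (- l) ltac:(lra)) as [del Hdel].
  exists del. intros t Ht Htc. change R in t. change (Rabs (t - c) < del) in Ht.
  specialize (Hdel (t - c) ltac:(lra) Ht).
  replace (c + (t - c)) with t in Hdel by ring.
  apply Rabs_def2 in Hdel.
  set (Q := (f t - f c) / (t - c)) in Hdel.
  assert (HQ : f t - f c = Q * (t - c)) by (unfold Q; field; lra).
  nra.
Qed.

Lemma derive_zero_const_on (f : R -> R) (I : R -> Prop) :
  is_interval I -> (forall z, I z -> is_derive f z 0) -> forall x y, I x -> I y -> f x = f y.
Proof.
  intros HI Hd.
  assert (Hlt : forall x y, I x -> I y -> x < y -> f x = f y).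
  { intros x y Hx Hy Hxy.
    destruct (MVT_cor2 f (fun _ => 0) x y Hxy) as [c [Hc _]]; [| lra].
    intros c Hc. apply is_derive_Reals, Hd, (HI x y c Hx Hy Hc). }
  intros x y Hx Hy.
  destruct (Rtotal_order x y) as [H | [-> | H]]; [auto | reflexivity | symmetry; auto].
Qed.

Lemma exp_solution_on (a : R) (w : R -> R) (I : R -> Prop) :
  is_interval I -> (forall z, I z -> is_derive w z (a * w z)) ->
  exists C, forall z, I z -> w z = C * exp (a * z).
Proof.
  intros HI Hw.
  destruct (classic (exists z0, I z0)) as [[z0 Hz0] | Hempty].
  2: { exists 0. intros z Hz. exfalso. eauto. }
  exists (w z0 * exp (- a * z0)). intros z Hz.
  assert (Hconst : w z * exp (- a * z) = w z0 * exp (- a * z0)).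
  { apply (derive_zero_const_on (fun t => w t * exp (- a * t)) I HI); [| exact Hz | exact Hz0].
    intros t Ht.
    replace 0 with (a * w t * exp (- a * t) + w t * (- a * exp (- a * t))) by ring.
    apply (is_derive_mult w (fun t => exp (- a * t))); [exact (Hw t Ht) | | apply Rmult_comm].
    auto_derive; [auto | ring]. }
  rewrite <- Hconst, Rmult_assoc, <- exp_plus.
  replace (- a * z + a * z) with 0 by ring.
  rewrite exp_0. ring.
Qed.

Lemma exp2_solution_on (a b : R) (y p q : R -> R) (I : R -> Prop) :
  is_interval I -> a + b <> 0 ->
  (forall z, I z -> is_derive y z (p z) /\ is_derive p z (q z) /\
     q z = (a - b) * p z + a * b * y z) ->
  exists A B, forall z, I z -> y z = A * exp (a * z) + B * exp (- b * z).
Proof.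
  intros HI Hab Hode.
  (* (D - a)(D + b) y = 0 is solved as two first-order equations. *)
  destruct (exp_solution_on a (fun z => p z + b * y z) I HI) as [C HC].
  { intros z Hz. destruct (Hode z Hz) as [Hy [Hp Hq]].
    replace (a * (p z + b * y z)) with (q z + b * p z) by (rewrite Hq; ring).
    apply (is_derive_plus p (fun t => b * y t)); [exact Hp | apply is_derive_scal, Hy]. }
  set (A := C / (a + b)).
  destruct (exp_solution_on (- b) (fun z => y z - A * exp (a * z)) I HI) as [B HB].
  { intros z Hz. destruct (Hode z Hz) as [Hy _].
    replace (- b * (y z - A * exp (a * z))) with (p z - A * (a * exp (a * z))).
    - apply (is_derive_minus y (fun t => A * exp (a * t))); [exact Hy |].
      apply is_derive_scal. auto_derive; [auto | ring].
    - assert (Hp : p z = C * exp (a * z) - b * y z) by (rewrite <- (HC z Hz); ring).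
      rewrite Hp. unfold A. field. exact Hab. }
  exists A, B. intros z Hz. specialize (HB z Hz). simpl in HB. lra.
Qed.

Lemma theta1_sub_theta2 (mu sigma r u : R) :
  0 < sigma -> theta1 mu sigma r u - theta2 mu sigma r u = 2 * (mu - u) / sigma ^ 2.
Proof. intros Hs. unfold theta1, theta2. field. lra. Qed.

Lemma theta1_mul_theta2 (mu sigma r u : R) :
  0 < sigma -> 0 <= r -> theta1 mu sigma r u * theta2 mu sigma r u = 2 * r / sigma ^ 2.
Proof.
  intros Hs Hr. unfold theta1, theta2.
  set (D := (mu - u) ^ 2 + 2 * r * sigma ^ 2).
  assert (HD : sqrt D * sqrt D = D).
  { apply sqrt_sqrt. unfold D. pose proof (pow2_ge_0 (mu - u)). pose proof (pow2_ge_0 sigma). nra. }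
  field_simplify_eq; [| lra].
  replace (sqrt D ^ 2) with (sqrt D * sqrt D) by ring.
  rewrite HD. unfold D. ring.
Qed.

Lemma theta1_add_theta2_pos (mu sigma r u : R) :
  0 < sigma -> 0 < r -> 0 < theta1 mu sigma r u + theta2 mu sigma r u.
Proof.
  intros Hs Hr. unfold theta1, theta2.
  assert (Hsqrt : 0 < sqrt ((mu - u) ^ 2 + 2 * r * sigma ^ 2)).
  { apply sqrt_lt_R0. pose proof (pow2_ge_0 (mu - u)). pose proof (pow_lt sigma 2 Hs). nra. }
  assert (0 < sigma ^ 2) by (apply pow_lt; lra).
  replace (_ + _) with (2 * sqrt ((mu - u) ^ 2 + 2 * r * sigma ^ 2) / sigma ^ 2) by (field; lra).
  apply Rdiv_lt_0_compat; lra.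
Qed.

Lemma hjb_const_control_solution (mu sigma r u c : R) (h p q : R -> R) (I : R -> Prop) :
  0 < sigma -> 0 < r -> is_interval I ->
  (forall z, I z -> is_derive h z (p z) /\ is_derive p z (q z) /\
     sigma ^ 2 / 2 * q z - (mu - u) * p z - r * (h z - c) = 0) ->
  exists A B, forall z, I z -> h z = hjb_branch mu sigma r u c A B z.
Proof.
  intros Hs Hr HI Hode.
  destruct (exp2_solution_on (theta1 mu sigma r u) (theta2 mu sigma r u)
              (fun z => h z - c) p q I HI) as [A [B Hsol]].
  - apply Rgt_not_eq, theta1_add_theta2_pos; assumption.
  - intros z Hz. destruct (Hode z Hz) as [Hh [Hp E]].
    split; [| split; [exact Hp |]].
    + replace (p z) with (p z - 0) by ring.
      apply (is_derive_minus h (fun _ => c)); [exact Hh |].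
      exact (is_derive_const (V := R_NormedModule) c z).
    + rewrite theta1_sub_theta2, theta1_mul_theta2 by lra.
      assert (0 < sigma ^ 2) by (apply pow_lt; lra).
      field_simplify_eq; lra.
  - exists A, B. intros z Hz. specialize (Hsol z Hz). simpl in Hsol.
    unfold hjb_branch. lra.
Qed.

Lemma hjb_branch_continuous (mu sigma r u c A B z : R) :
  continuous (hjb_branch mu sigma r u c A B) z.
Proof.
  apply (ex_derive_continuous (V := R_NormedModule)).
  unfold hjb_branch. auto_derive. auto.
Qed.

Lemma hjb_min_above (mu sigma r beta e : R) (h p q : R -> R) (a b c : R) :
  0 < sigma -> 0 < r -> 0 <= beta -> a < c < b -> continuous p c ->
  (forall t, a < t < b -> is_derive h t (p t) /\ is_derive p t (q t) /\
     (p t < - beta -> - r * h t - mu * p t + sigma ^ 2 / 2 * q t = e)) ->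
  (forall t, a < t < b -> p c <= p t) -> - beta <= p c.
Proof.
  intros Hs Hr Hbeta Hc Hpc_cont Hode Hmin.
  apply Rnot_lt_le. intro Hpc.
  destruct (Hode c Hc) as [Hhc [Hqc Hodec]].
  assert (Hq0 : q c = 0).
  { apply is_derive_Reals in Hqc.
    apply (deriv_minimum p a b c (exist _ (q c) Hqc)); try lra.
    intros x Hx1 Hx2. apply Hmin. lra. }
  (* At the minimum the equation reads g(c) = -e with g = r h + mu h'; since
     g'(c) = r p(c) < 0, g > -e just left of c, which forces q > 0 there. *)
  set (g := fun t => r * h t + mu * p t).
  assert (Hg : is_derive g c (r * p c)).
  { replace (r * p c) with (r * p c + mu * q c) by (rewrite Hq0; ring).
    apply (is_derive_plus (fun t => r * h t) (fun t => mu * p t));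
      apply is_derive_scal; assumption. }
  assert (Hnear : at_left c (fun t => g c < g t /\ p t < - beta /\ a < t)).
  { repeat apply filter_and.
    - apply (derive_neg_at_left g c _ Hg). nra.
    - apply filter_le_within, continuous_lt_locally; assumption.
    - apply filter_le_within, (open_gt a c). lra. }
  destruct (at_left_interval c _ Hnear) as [del [Hdel Hint]].
  assert (Hqpos : forall t, c - del < t < c -> 0 < q t).
  { intros t Ht. destruct (Hint t Ht) as [Hgt [Hpt Hat]].
    destruct (Hode t ltac:(lra)) as [_ [_ Hodet]].
    specialize (Hodet Hpt). specialize (Hodec Hpc).
    rewrite Hq0 in Hodec. unfold g in Hgt.
    assert (0 < sigma ^ 2) by (apply pow_lt; lra).
    nra. }
  assert (Ha' : a < c - del / 2) by (apply (Hint (c - del / 2)); lra).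
  destruct (MVT_cor2 p q (c - del / 2) c) as [xi [Hxi Hxi']]; [lra | |].
  { intros t Ht. apply is_derive_Reals, Hode. lra. }
  assert (p c <= p (c - del / 2)) by (apply Hmin; lra).
  specialize (Hqpos xi ltac:(lra)).
  nra.
Qed.

Lemma hjb_no_dip (mu sigma r beta e : R) (h p q : R -> R) (a b : R) :
  0 < sigma -> 0 < r -> 0 <= beta -> a <= b ->
  (forall t, a <= t <= b -> continuous p t) ->
  (forall t, a < t < b -> is_derive h t (p t) /\ is_derive p t (q t) /\
     (p t < - beta -> - r * h t - mu * p t + sigma ^ 2 / 2 * q t = e)) ->
  - beta <= p a -> - beta <= p b -> forall y, a <= y <= b -> - beta <= p y.
Proof.
  intros Hs Hr Hbeta Hab Hcont Hode Ha Hb y Hy.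
  destruct (continuity_ab_min p a b Hab) as [c [Hmin Hc]].
  { intros t Ht. apply continuity_pt_filterlim, Hcont, Ht. }
  enough (- beta <= p c) by (specialize (Hmin y Hy); lra).
  destruct (Rle_lt_or_eq_dec _ _ (proj1 Hc)) as [Hac | <-]; [| exact Ha].
  destruct (Rle_lt_or_eq_dec _ _ (proj2 Hc)) as [Hcb | ->]; [| exact Hb].
  apply (hjb_min_above mu sigma r beta e h p q a b c); try assumption.
  - lra.
  - apply Hcont. lra.
  - intros t Ht. apply Hmin. lra.
Qed.

Lemma deriv_le_neg_unbounded (h p : R -> R) (m z1 L : R) :
  m < 0 -> (forall z, z1 <= z -> is_derive h z (p z)) -> (forall z, z1 <= z -> p z <= m) ->
  exists z, z1 <= z /\ h z < L.
Proof.
  intros Hm Hder Hp.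
  destruct (Rlt_or_le (h z1) L) as [Hlt | Hge]; [exists z1; split; [lra | exact Hlt] |].
  set (t := (h z1 - L) / (- m) + 1).
  assert (Ht : 1 <= t).
  { unfold t. assert (0 <= (h z1 - L) / - m) by (apply Rdiv_le_0_compat; lra). lra. }
  exists (z1 + t). split; [lra |].
  destruct (MVT_cor2 h p z1 (z1 + t)) as [xi [Hxi Hxi']];
    [lra | intros c Hc; apply is_derive_Reals, Hder; lra |].
  assert (Hpxi : p xi <= m) by (apply Hp; lra).
  assert (Hmt : - m * t = h z1 - L - m) by (unfold t; field; lra).
  nra.
Qed.

Lemma exists_above (h p : R -> R) (m a L : R) :
  m < 0 -> (forall z, a < z -> is_derive h z (p z)) -> (forall z, a < z -> L <= h z) ->
  exists x, a < x /\ m <= p x.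
Proof.
  intros Hm Hder HL. apply NNPP. intro Hnone.
  destruct (deriv_le_neg_unbounded h p m (a + 1) L Hm) as [z [Hz Hhz]].
  - intros z Hz. apply Hder. lra.
  - intros z Hz. apply Rlt_le, Rnot_le_lt. intro Hle.
    apply Hnone. exists z. split; [lra | exact Hle].
  - specialize (HL z ltac:(lra)). lra.
Qed.

Lemma above_stays_above (h p : R -> R) (m a L : R) :
  m < 0 -> (forall z, a < z -> is_derive h z (p z)) -> (forall z, a < z -> L <= h z) ->
  no_dip_below p m (fun t => a < t) ->
  forall x z, a < x <= z -> m <= p x -> m <= p z.
Proof.
  intros Hm Hder HL Hdip x z Hxz Hx. apply Rnot_lt_le. intro Hz.
  destruct (deriv_le_neg_unbounded h p m z L Hm) as [w [Hw Hhw]].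
  - intros w Hw. apply Hder. lra.
  - intros w Hw. apply Rlt_le, Rnot_le_lt. intro Hpw.
    assert (m <= p z) by (apply (Hdip x w z); lra). lra.
  - specialize (HL w ltac:(lra)). lra.
Qed.

Lemma initial_segment_above (p : R -> R) (m a b : R) :
  a < b -> (forall t, a < t <= b -> continuous p t) ->
  at_right a (fun t => m <= p t) -> no_dip_below p m (fun t => a < t <= b) ->
  exists c, a < c <= b /\ (forall t, a < t <= c -> m <= p t) /\ (forall t, c < t <= b -> p t < m).
Proof.
  intros Hab Hcont Hstart Hdip.
  destruct (at_right_interval a _ (filter_and _ _ Hstart (at_right_below a b Hab)))
    as [del [Hdel Hinit]].
  set (x0 := a + del / 2).
  assert (Hx0 : m <= p x0 /\ a < x0 < b) by (apply Hinit; unfold x0; lra).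
  set (S := fun t => a < t <= b /\ m <= p t).
  destruct (completeness S) as [c [Hub Hlub]].
  { exists b. intros t Ht. apply Ht. }
  { exists x0. split; [lra | apply Hx0]. }
  assert (Hx0c : x0 <= c) by (apply Hub; split; [lra | apply Hx0]).
  assert (Hcb : c <= b) by (apply Hlub; intros t Ht; apply Ht).
  assert (Hbelow : forall t, a < t < c -> m <= p t).
  { intros t Ht. destruct (Rlt_or_le t x0) as [Htx | Htx].
    - apply Hinit. unfold x0 in Htx. lra.
    - destruct (classic (exists s, S s /\ t < s)) as [[s [[Hs Hps] Hts]] | Hnone].
      + apply (Hdip x0 s t); [lra | lra | lra | apply Hx0 | exact Hps].
      + assert (c <= t); [| lra].
        apply Hlub. intros s Hs. apply Rnot_lt_le. intro. apply Hnone. eauto. }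
  assert (Hc : m <= p c).
  { apply (closed_filterlim_loc (F := at_left c) p (fun y => m <= y)).
    - apply continuous_at_left, Hcont. lra.
    - apply (filter_imp (fun t => a < t < c)); [intros t Ht; apply Hbelow, Ht |].
      apply at_left_above. lra.
    - apply closed_ge. }
  exists c. split; [lra | split].
  - intros t Ht. destruct (Rlt_or_le t c); [apply Hbelow; lra |].
    replace t with c by lra. exact Hc.
  - intros t Ht. apply Rnot_le_lt. intro Hpt.
    assert (t <= c) by (apply Hub; split; [lra | exact Hpt]). lra.
Qed.

Lemma final_segment_above (p : R -> R) (m a : R) :
  (forall t, a < t -> continuous p t) -> (exists x, a < x /\ m <= p x) ->
  (forall x z, a < x <= z -> m <= p x -> m <= p z) ->
  exists c, a <= c /\ (forall t, a < t < c -> p t < m) /\ (forall t, c <= t -> a < t -> m <= p t).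
Proof.
  intros Hcont [x0 [Hx0 Hpx0]] Hup.
  set (S := fun x => a <= x /\ forall t, a < t <= x -> p t < m).
  destruct (completeness S) as [c [Hub Hlub]].
  { exists x0. intros x [Hax Hx]. apply Rnot_lt_le. intro. specialize (Hx x0 ltac:(lra)). lra. }
  { exists a. split; [lra | intros; lra]. }
  assert (Hac : a <= c) by (apply Hub; split; [lra | intros; lra]).
  exists c. split; [exact Hac | split].
  - intros t Ht. apply Rnot_le_lt. intro Hpt.
    assert (c <= t); [| lra].
    apply Hlub. intros x [Hax Hx]. apply Rnot_lt_le. intro. specialize (Hx t ltac:(lra)). lra.
  - intros t Hct Hat. apply Rnot_lt_le. intro Hpt.
    destruct (locally_interval t _ (continuous_lt_locally p t m (Hcont t Hat) Hpt))
      as [del [Hdel Hnear]].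
    assert (t + del / 2 <= c); [| lra].
    apply Hub. split; [lra |]. intros s Hs.
    destruct (Rlt_or_le (t - del) s).
    + apply Hnear. apply Rabs_def1; lra.
    + apply Rnot_le_lt. intro Hps. assert (m <= p t) by (apply (Hup s t); lra). lra.
Qed.

Lemma sup_ctrl_optimal (u0 beta p u : R) :
  0 <= u0 -> optimal_control u0 beta p u -> is_sup_ctrl u0 beta p ((beta + p) * u).
Proof.
  intros Hu0 Hopt. split.
  - intros y [v [Hv ->]]. destruct Hopt as [[-> Hp] | [-> Hp]]; nra.
  - intros S HS. apply HS. exists u. split; [| reflexivity].
    destruct Hopt as [[-> _] | [-> _]]; lra.
Qed.

Lemma ind_gt_le (d z : R) : z <= d -> ind_gt d z = 0.
Proof. intros H. unfold ind_gt. destruct (Rlt_dec d z); lra. Qed.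

Lemma ind_gt_gt (d z : R) : d < z -> ind_gt d z = 1.
Proof. intros H. unfold ind_gt. destruct (Rlt_dec d z); lra. Qed.

Section HJBSolution.

Variables (mu sigma u0 r beta d : R) (h h1 h2 : R -> R).
Hypotheses (Hsigma : 0 < sigma) (Hu0 : 0 < u0) (Hr : 0 < r) (Hbeta : 0 < beta) (Hd : 0 < d).
Hypothesis Hsol : HJB_solution mu sigma u0 r beta d h h1 h2.

Lemma h_bounded_below (z : R) : 0 <= z -> (beta * u0 - 1) / r <= h z.
Proof. intros Hz. apply (proj1 Hsol), Hz. Qed.

Lemma h_derive (z : R) : 0 < z -> is_derive h z (h1 z).
Proof. destruct Hsol as (_ & _ & Hder & _). apply Hder. Qed.

Lemma h_continuous (z : R) : 0 < z -> continuous h z.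
Proof.
  intros Hz. apply (ex_derive_continuous (V := R_NormedModule)).
  exists (h1 z). apply h_derive, Hz.
Qed.

Lemma h_right_continuous (a : R) : 0 <= a -> filterlim h (at_right a) (locally (h a)).
Proof.
  intros Ha. destruct (Rle_lt_or_eq_dec _ _ Ha) as [Ha' | <-].
  - apply continuous_at_right, h_continuous, Ha'.
  - destruct Hsol as (_ & Hrd0 & _).
    refine (filterlim_ext _ _ _ (right_deriv_continuous h 0 _ Hrd0)).
    intros t. rewrite Rplus_0_l. reflexivity.
Qed.

Lemma h1_continuous (z : R) : 0 < z -> continuous h1 z.
Proof. destruct Hsol as (_ & _ & _ & _ & Hcont & _). apply Hcont. Qed.

Lemma h1_derive (z : R) : 0 < z < d \/ d < z -> is_derive h1 z (h2 z).
Proof.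
  destruct Hsol as (_ & _ & _ & _ & _ & _ & Hder1 & _ & _ & _ & _ & Hder2 & _).
  intros [Hz | Hz]; [apply Hder1 | apply Hder2]; exact Hz.
Qed.

Lemma hjb_at_optimal (z u : R) :
  0 <= z -> optimal_control u0 beta (h1 z) u ->
  - r * h z - mu * h1 z + sigma ^ 2 / 2 * h2 z + (beta + h1 z) * u = ind_gt d z.
Proof.
  intros Hz Hopt.
  destruct Hsol as (_ & _ & _ & _ & _ & _ & _ & _ & _ & _ & _ & _ & _ & Hhjb).
  destruct (Hhjb z Hz) as [S [HS E]].
  rewrite (is_lub_u _ _ _ HS (sup_ctrl_optimal u0 beta (h1 z) u ltac:(lra) Hopt)) in E.
  exact E.
Qed.

Lemma h1_no_dip_on (I : R -> Prop) (e : R) :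
  (forall t, I t -> 0 < t) ->
  (forall x z t, I x -> I z -> x < t < z -> (t < d \/ d < t) /\ ind_gt d t = e) ->
  no_dip_below h1 (- beta) I.
Proof.
  intros Hpos Hbetween x z y Hx Hz Hy Hpx Hpz.
  pose proof (Hpos x Hx) as Hx0.
  apply (hjb_no_dip mu sigma r beta e h h1 h2 x z); try lra.
  - intros t Ht. apply h1_continuous. lra.
  - intros t Ht. destruct (Hbetween x z t Hx Hz Ht) as [Htd He].
    split; [apply h_derive; lra | split; [apply h1_derive; lra | intros Hlow]].
    rewrite <- He, <- (Rplus_0_r (_ + _)), <- (Rmult_0_r (beta + h1 t)).
    apply hjb_at_optimal; [lra | right; split; [reflexivity | lra]].
Qed.

Lemma first_switch :
  h1 0 = 0 ->
  exists zf, 0 < zf <= d /\ (forall t, 0 < t <= zf -> - beta <= h1 t) /\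
    (forall t, zf < t <= d -> h1 t < - beta).
Proof.
  intros H10. apply initial_segment_above; [lra | intros t Ht; apply h1_continuous; lra | |].
  - destruct Hsol as (_ & _ & _ & Hc0 & _).
    apply (Hc0 (fun y => - beta <= y)), (filter_imp (fun y => - beta < y)); [intros; lra |].
    apply open_gt. rewrite H10. lra.
  - apply (h1_no_dip_on _ 0); [intros; lra |].
    intros x z t Hx Hz Ht. split; [left; lra | apply ind_gt_le; lra].
Qed.

Lemma second_switch :
  exists zg, d <= zg /\ (forall t, d < t < zg -> h1 t < - beta) /\
    (forall t, zg <= t -> d < t -> - beta <= h1 t).
Proof.
  assert (Hdip : no_dip_below h1 (- beta) (fun t => d < t)).
  { apply (h1_no_dip_on _ 1); [intros; lra |].
    intros x z t Hx Hz Ht. split; [right; lra | apply ind_gt_gt; lra]. }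
  assert (Hder : forall z, d < z -> is_derive h z (h1 z)) by (intros; apply h_derive; lra).
  assert (Hlow : forall z, d < z -> (beta * u0 - 1) / r <= h z)
    by (intros; apply h_bounded_below; lra).
  apply final_segment_above.
  - intros t Ht. apply h1_continuous. lra.
  - apply (exists_above h h1 (- beta) d _ ltac:(lra) Hder Hlow).
  - apply (above_stays_above h h1 (- beta) d _ ltac:(lra) Hder Hlow Hdip).
Qed.

Lemma hjb_branch_on (I : R -> Prop) (u c e : R) :
  is_interval I ->
  (forall z, I z -> (0 < z < d \/ d < z) /\ optimal_control u0 beta (h1 z) u /\ ind_gt d z = e) ->
  r * c = beta * u - e ->
  exists A B, forall z, I z -> h z = hjb_branch mu sigma r u c A B z.
Proof.
  intros HI Hreg Hc. apply (hjb_const_control_solution _ _ _ _ _ h h1 h2); try assumption.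
  intros z Hz. destruct (Hreg z Hz) as [Hzd [Hopt He]].
  split; [apply h_derive; lra | split; [apply h1_derive, Hzd |]].
  pose proof (hjb_at_optimal z u ltac:(lra) Hopt). lra.
Qed.

Lemma hjb_branch_on_closed (a b u c e : R) :
  0 <= a <= b ->
  (forall z, a < z < b -> (z < d \/ d < z) /\ optimal_control u0 beta (h1 z) u /\ ind_gt d z = e) ->
  r * c = beta * u - e ->
  exists A B, forall z, a <= z <= b -> h z = hjb_branch mu sigma r u c A B z.
Proof.
  intros Hab Hreg Hc. destruct (Rle_lt_or_eq_dec a b (proj2 Hab)) as [Hlt | <-].
  - destruct (hjb_branch_on (fun z => a < z < b) u c e) as [A [B HAB]]; [| | exact Hc |].
    + intros x y t Hx Hy Ht. lra.
    + intros z Hz. destruct (Hreg z Hz) as [Hzd HR]. split; [lra | exact HR].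
    + exists A, B. apply eq_on_closed_interval; [exact Hlt | | | | | exact HAB].
      * apply h_right_continuous. lra.
      * apply continuous_at_left, h_continuous. lra.
      * apply hjb_branch_continuous.
      * apply hjb_branch_continuous.
  - (* A single point: fit the coefficient of the growing exponential. *)
    exists ((h a - c) * exp (- theta1 mu sigma r u * a)), 0. intros z Hz.
    replace z with a by lra. unfold hjb_branch.
    rewrite Rmult_assoc, <- exp_plus.
    replace (- theta1 mu sigma r u * a + theta1 mu sigma r u * a) with 0 by ring.
    rewrite exp_0. ring.
Qed.

End HJBSolution.

Theorem lemma2p3 (mu sigma u0 r beta d : R) (h h1 h2 : R -> R) :
  0 < sigma -> 0 < u0 -> 0 < r -> 0 < beta -> 0 < d ->
  HJB_solution mu sigma u0 r beta d h h1 h2 ->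
  (forall x y, 0 <= x -> x <= y -> h y <= h x) ->
  h1 0 = 0 ->
  exists zf zg A1 B1 A2 B2 a1 b1 a2 b2 : R,
    0 < zf <= d /\ d <= zg /\
    let fl := fun z => A1 * exp (theta1 mu sigma r 0 * z)
                       + B1 * exp (- theta2 mu sigma r 0 * z) in
    let fb := fun z => beta * u0 / r + A2 * exp (theta1 mu sigma r u0 * z)
                       + B2 * exp (- theta2 mu sigma r u0 * z) in
    let gl := fun z => - (1 / r) + a1 * exp (theta1 mu sigma r 0 * z)
                       + b1 * exp (- theta2 mu sigma r 0 * z) in
    let gb := fun z => (beta * u0 - 1) / r + a2 * exp (theta1 mu sigma r u0 * z)
                       + b2 * exp (- theta2 mu sigma r u0 * z) in
    (forall z, 0 <= z <= zf -> h z = fb z) /\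
    (forall z, zf < z <= d -> h z = fl z) /\
    (forall z, d < z <= zg -> h z = gl z) /\
    (forall z, zg <= z -> d < z -> h z = gb z).
Proof.
  intros Hs Hu Hr Hb Hd Hsol _ H10.
  destruct (first_switch mu sigma u0 r beta d h h1 h2 Hs Hu Hr Hb Hd Hsol H10)
    as [zf [Hzf [Hup1 Hlow1]]].
  destruct (second_switch mu sigma u0 r beta d h h1 h2 Hs Hu Hr Hb Hd Hsol)
    as [zg [Hzg [Hlow2 Hup2]]].
  pose proof (hjb_branch_on_closed mu sigma u0 r beta d h h1 h2 Hs Hu Hr Hd Hsol) as Hclosed.
  destruct (Hclosed 0 zf u0 (beta * u0 / r) 0) as [A2 [B2 Hfb]]; [lra | | field; lra |].
  { intros z Hz. split; [left; lra | split; [left; split; [reflexivity |] |]].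
    - apply Hup1. lra.
    - apply ind_gt_le. lra. }
  destruct (Hclosed zf d 0 0 0) as [A1 [B1 Hfl]]; [lra | | ring |].
  { intros z Hz. split; [left; lra | split; [right; split; [reflexivity |] |]].
    - apply Rlt_le, Hlow1. lra.
    - apply ind_gt_le. lra. }
  destruct (Hclosed d zg 0 (- (1 / r)) 1) as [a1 [b1 Hgl]]; [lra | | field; lra |].
  { intros z Hz. split; [right; lra | split; [right; split; [reflexivity |] |]].
    - apply Rlt_le, Hlow2. lra.
    - apply ind_gt_gt. lra. }
  destruct (hjb_branch_on mu sigma u0 r beta d h h1 h2 Hs Hu Hr Hd Hsol
              (fun z => zg <= z /\ d < z) u0 ((beta * u0 - 1) / r) 1) as [a2 [b2 Hgb]];
    [intros x y t Hx Hy Ht; lra | | field; lra |].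
  { intros z [Hz Hzd]. split; [right; lra | split; [left; split; [reflexivity |] |]].
    - apply Hup2; lra.
    - apply ind_gt_gt. lra. }
  exists zf, zg, A1, B1, A2, B2, a1, b1, a2, b2.
  split; [lra | split; [lra |]]. intros fl fb gl gb.
  split; [| split; [| split]].
  - exact Hfb.
  - intros z Hz. rewrite (Hfl z ltac:(lra)). unfold hjb_branch, fl. ring.
  - intros z Hz. exact (Hgl z ltac:(lra)).
  - intros z Hz Hzd. exact (Hgb z (conj Hz Hzd)).
Qed.
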